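(* In a strongly causal, digitalizable OPT, for every $\rho\in\mathsf{St}_1(\mathrm{A})$ one has $I(\rho)\ge I^C(\rho)$.
   Context: Framework (operational probabilistic theory, OPT): each system $\mathrm{A}$ has states $\mathsf{St}(\mathrm{A})$ (normalized ones $\mathsf{St}_1(\mathrm{A})$), effects $\mathsf{Eff}(\mathrm{A})$, transformations $\mathsf{Tr}(\mathrm{A}\to\mathrm{B})$ (channels $\mathsf{Tr}_1$), sequential ($\circ$) and parallel ($\boxtimes$) composition, pairing $(a|\rho)$. Strong causality: for every test $\{\mathcal A_i\}$ and tests $\{\mathcal B^i_j\}_j$, $\{\mathcal B^i_j\circ\mathcal A_i\}$ is a test; unique deterministic effect $e_{\mathrm{A}}$. Operational norm $\|\delta\|_{\rm op}:=\sup_{a\in\mathsf{Eff}(\mathrm{A})}((2a-e_{\mathrm{A}})|\delta)$. A refinement of a state $\Omega$ is a collection of states contained in a preparation test summing to $\Omega$. A dilation of $\rho\in\mathsf{St}(\mathrm{A})$ is $\Psi\in\mathsf{St}(\mathrm{A}\mathrm{C})$ with $(\mathcal I_{\mathrm{A}}\boxtimes e_{\mathrm{C}})\Psi=\rho$. Digitalizability: there is an obit system $\mathrm{O}$ such that every system $\mathrm{X}$ can be perfectly encoded via channels into $\mathrm{O}^{\boxtimes k}$ for some finite $k$. Information content: compression scheme $\mathcal E\in\mathsf{Tr}_1(\mathrm{A}^{\boxtimes N}\to\mathrm{O}^{\boxtimes M})$, $\mathcal D\in\mathsf{Tr}_1(\mathrm{O}^{\boxtimes M}\to\mathrm{A}^{\boxtimes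 N})$; $E_{N,M,\varepsilon}(\rho)$ is the set of schemes with $\sup_{\mathrm{C},\{\Psi_i\}}\sum_i\|((\mathcal D\circ\mathcal E)\boxtimes\mathcal I_{\mathrm{C}})\Psi_i-\Psi_i\|_{\rm op}<\varepsilon$, over all systems $\mathrm{C}$ and refinements $\{\Psi_i\}\subseteq\mathsf{St}(\mathrm{A}^{\boxtimes N}\mathrm{C})$ of dilations of $\rho^{\boxtimes N}$; $I(\rho):=\lim_{\varepsilon\to0}\limsup_{N\to\infty}\min\{M:E_{N,M,\varepsilon}(\rho)\ne\emptyset\}/N$. Classical version $I^C$: for a compression scheme $(\mathcal E,\mathcal D)$, a system $\mathrm{C}$, a preparation test $\{\Psi_i\}_{i=1}^n$ of $\mathrm{A}^{\boxtimes N}\mathrm{C}$ with $\sum_i\Psi_i$ a dilation of $\rho^{\boxtimes N}$, and an observation test $\{a_j\}_{j=1}^m$ of $\mathrm{A}^{\boxtimes N}\mathrm{C}$, set $p_{ij}:=(a_j|\Psi_i)$, $q_{ij}:=(a_j|((\mathcal D\circ\mathcal E)\boxtimes\mathcal I_{\mathrm{C}})\Psi_i)$, and let $I(X:Y)=\sum_{ij}p_{ij}\log_2\frac{p_{ij}}{p^X_ip^Y_j}$, $I(X:\tilde Y)=\sum_{ij}q_{ij}\log_2\frac{q_{ij}}{q^X_iq^{\tilde Y}_j}$ be the Shannon mutual informations (marginals $p^X,p^Y,q^X=p^X,q^{\tilde Y}$). $E^C_{N,M,\delta}(\rho)$ is the set of schemes with $\sup_{\mathrm{C},\{\Psi_i\},\{a_j\}}L^{-1}|I(X:Y)-I(X:\tilde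 Y)|<\delta$, where $L=\log_2(mn-1)$ (cases with $m=1$ or $n=1$ give zero difference and are disregarded). $R^C_{\delta,N}(\rho):=\min\{M:E^C_{N,M,\delta}(\rho)\ne\emptyset\}/N$, $R^C_\delta(\rho):=\limsup_{N\to\infty}R^C_{\delta,N}(\rho)$, $I^C(\rho):=\lim_{\delta\to0}R^C_\delta(\rho)$. *)

From HB Require Import structures.
From mathcomp Require Import all_boot all_order all_algebra.
From mathcomp Require Import all_classical all_reals all_analysis.
Set Implicit Arguments. Unset Strict Implicit. Unset Printing Implicit Defensive.
Import Order.TTheory GRing.Theory Num.Theory.
Local Open Scope classical_set_scope.
Local Open Scope ring_scope.

(* Systems form a strict monoid under [tens] with unit [unitS] (the    *)
(* trivial system I).  [Tr A B] is the real vector space spanned by   *)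
(* the transformations (events) from A to B; the physical events are   *)
(* those that occur in some test.  [scal] identifies events of I -> I  *)
(* with real numbers (probabilities).                                  *)
Record OPTdata (R : realType) := MkOPTdata {
  sys : Type;
  unitS : sys;
  tens : sys -> sys -> sys;
  tens_unit_l : forall A, tens unitS A = A;
  tens_unit_r : forall A, tens A unitS = A;
  tens_assoc : forall A B C, tens A (tens B C) = tens (tens A B) C;
  Tr : sys -> sys -> lmodType R;
  idt : forall A, Tr A A;
  comp : forall A B C, Tr B C -> Tr A B -> Tr A C;
  par : forall A B C D, Tr A B -> Tr C D -> Tr (tens A C) (tens B D);
  scal : Tr unitS unitS -> R;
  test : forall A B, seq (Tr A B) -> Prop }.

Arguments unitS {R}.
Arguments tens {R}.
Arguments Tr {R}.
Arguments idt {R o} A.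
Arguments comp {R o A B C}.
Arguments par {R o A B C D}.
Arguments scal {R o}.
Arguments test {R o A B}.

Definition hcast (R : realType) (O : OPTdata R) (A A' B B' : sys O)
  (eA : A = A') (eB : B = B') (f : Tr O A B) : Tr O A' B' :=
  match eA in _ = A1, eB in _ = B1 return Tr O A1 B1 with
  | erefl, erefl => f end.

Definition coarse (R : realType) (O : OPTdata R) (A B : sys O)
  (s : seq (Tr O A B)) (k : nat) (f : nat -> nat) : seq (Tr O A B) :=
  [seq \sum_(i < size s | f i == j) s`_i | j <- iota 0 k].

Definition OPT_axioms (R : realType) (O : OPTdata R) : Prop :=
  (forall A B C D (f : Tr O C D) (g : Tr O B C) (h : Tr O A B),
      comp f (comp g h) = comp (comp f g) h) /\
  (forall A B (f : Tr O A B), comp (idt B) f = f /\ comp f (idt A) = f) /\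
  (forall A B C (a : R) (f f' : Tr O B C) (g : Tr O A B),
      comp (a *: f + f') g = a *: comp f g + comp f' g) /\
  (forall A B C (a : R) (f : Tr O B C) (g g' : Tr O A B),
      comp f (a *: g + g') = a *: comp f g + comp f g') /\
  (forall A B C D (a : R) (f f' : Tr O A B) (g : Tr O C D),
      par (a *: f + f') g = a *: par f g + par f' g) /\
  (forall A B C D (a : R) (f : Tr O A B) (g g' : Tr O C D),
      par f (a *: g + g') = a *: par f g + par f g') /\
  (forall A B C D E F (f : Tr O B C) (f' : Tr O A B)
          (g : Tr O E F) (g' : Tr O D E),
      par (comp f f') (comp g g') = comp (par f g) (par f' g')) /\
  (forall A B, par (idt A) (idt B) = idt (tens O A B)) /\
  (forall (a : R) (x y : Tr O (unitS O) (unitS O)),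
      scal (a *: x + y) = a * scal x + scal y) /\
  (forall A : sys O, test [:: idt A]) /\
  (forall A B C (s : seq (Tr O A B)) (t : seq (Tr O B C)),
      test s -> test t -> test [seq comp y x | x <- s, y <- t]) /\
  (forall A B C D (s : seq (Tr O A B)) (t : seq (Tr O C D)),
      test s -> test t -> test [seq par x y | x <- s, y <- t]) /\
  (forall A B (s : seq (Tr O A B)) (k : nat) (f : nat -> nat),
      test s -> (forall i, i < size s -> f i < k)%N ->
      (forall j, j < k -> exists2 i, (i < size s)%N & f i = j)%N ->
      test (coarse s k f)) /\
  (forall s : seq (Tr O (unitS O) (unitS O)), test s ->
      (forall x, x \in s -> 0 <= scal x) /\ \sum_(x <- s) scal x = 1).

Section OPTnotions.
Variables (R : realType) (O : OPTdata R).

Definition isEvent (A B : sys O) (f : Tr O A B) : Prop :=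
  exists s : seq (Tr O A B), test s /\ f \in s.
Definition St (A : sys O) : set (Tr O (unitS O) A) := [set r | isEvent r].
Definition Eff (A : sys O) : set (Tr O A (unitS O)) := [set a | isEvent a].
(* deterministic transformations = channels; normalized states *)
Definition channel (A B : sys O) (f : Tr O A B) : Prop := test [:: f].
Definition St1 (A : sys O) : set (Tr O (unitS O) A) := [set r | channel r].

Definition unique_det_effects (e : forall A : sys O, Tr O A (unitS O)) : Prop :=
  forall A, channel (e A) /\ (forall a : Tr O A (unitS O), channel a -> a = e A).

(* strong causality: conditional tests are tests, unique det. effect *)
Definition StronglyCausal (e : forall A : sys O, Tr O A (unitS O)) : Prop :=
  (forall (A B C : sys O) (s : seq (Tr O A B)) (t : nat -> seq (Tr O B C)),
     test s -> (forall i, i < size s -> test (t i))%N ->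
     test (flatten [seq [seq comp y s`_i | y <- t i] | i <- iota 0 (size s)]))
  /\ unique_det_effects e.

Fixpoint sysPow (A : sys O) (N : nat) : sys O :=
  if N is N'.+1 then tens O (sysPow A N') A else unitS O.

Fixpoint statePow (A : sys O) (rho : Tr O (unitS O) A) (N : nat)
  : Tr O (unitS O) (sysPow A N) :=
  if N is N'.+1 then
    hcast (tens_unit_l (unitS O)) erefl (par (statePow rho N') rho)
  else idt (unitS O).

Definition digitalizable (Ob : sys O) : Prop :=
  forall X : sys O, exists k (E : Tr O X (sysPow Ob k)) (D : Tr O (sysPow Ob k) X),
    [/\ channel E, channel D & comp D E = idt X].

Variable e : forall A : sys O, Tr O A (unitS O).

Definition pairing (A : sys O) (a : Tr O A (unitS O)) (r : Tr O (unitS O) A) : R :=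
  scal (comp a r).

Definition opnorm (A : sys O) (d : Tr O (unitS O) A) : \bar R :=
  ereal_sup [set (pairing (2%:R *: a - e A) d)%:E | a in Eff (A:=A)].

Definition dilation (A C : sys O) (rho : Tr O (unitS O) A)
  (Psi : Tr O (unitS O) (tens O A C)) : Prop :=
  St Psi /\ hcast erefl (tens_unit_r A) (comp (par (idt A) (e C)) Psi) = rho.

Definition refinement (X : sys O) (s : seq (Tr O (unitS O) X))
  (Omega : Tr O (unitS O) X) : Prop :=
  (exists (t : seq (Tr O (unitS O) X)) (m : bitseq), test t /\ s = mask m t)
  /\ \sum_(x <- s) x = Omega.

Variable Ob : sys O.

Definition qerror (A : sys O) (rho : Tr O (unitS O) A) (N M : nat)
  (E : Tr O (sysPow A N) (sysPow Ob M)) (D : Tr O (sysPow Ob M) (sysPow A N))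
  : \bar R :=
  ereal_sup [set x | exists (C : sys O) (Omega : Tr O (unitS O) (tens O (sysPow A N) C))
                           (s : seq (Tr O (unitS O) (tens O (sysPow A N) C))),
     [/\ dilation (statePow rho N) Omega, refinement s Omega &
         x = \sum_(P <- s) opnorm (comp (par (comp D E) (idt C)) P - P)]].

Definition Eset (A : sys O) (rho : Tr O (unitS O) A) (N M : nat) (eps : R) : Prop :=
  exists (E : Tr O (sysPow A N) (sysPow Ob M)) (D : Tr O (sysPow Ob M) (sysPow A N)),
    [/\ channel E, channel D & (qerror rho E D < eps%:E)%E].

Definition rateQ (A : sys O) (rho : Tr O (unitS O) A) (eps : R) (N : nat) : \bar R :=
  (ereal_inf [set (M%:R)%:E | M in [set M | Eset rho N M eps]] * (N%:R^-1)%:E)%E.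

Definition infoQ (A : sys O) (rho : Tr O (unitS O) A) : \bar R :=
  lim ((limn_esup (rateQ rho eps)) @[eps --> 0^'+]).

Definition log2 (x : R) : R := ln x / ln 2.

Definition mutinf (n m : nat) (p : nat -> nat -> R) : R :=
  \sum_(i < n) \sum_(j < m)
    (if p i j == 0 then 0
     else p i j * log2 (p i j / ((\sum_(j' < m) p i j') * (\sum_(i' < n) p i' j)))).

Definition cerrorTerm (A C : sys O) (N M : nat)
  (E : Tr O (sysPow A N) (sysPow Ob M)) (D : Tr O (sysPow Ob M) (sysPow A N))
  (s : seq (Tr O (unitS O) (tens O (sysPow A N) C)))
  (t : seq (Tr O (tens O (sysPow A N) C) (unitS O))) : R :=
  let n := size s in let m := size t in
  let p := fun i j => pairing t`_j s`_i in
  let q := fun i j => pairing t`_j (comp (par (comp D E) (idt C)) s`_i) in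
  `|mutinf n m p - mutinf n m q| / log2 ((m * n)%:R - 1).

Definition cerror (A : sys O) (rho : Tr O (unitS O) A) (N M : nat)
  (E : Tr O (sysPow A N) (sysPow Ob M)) (D : Tr O (sysPow Ob M) (sysPow A N))
  : \bar R :=
  ereal_sup [set x | exists (C : sys O)
                           (s : seq (Tr O (unitS O) (tens O (sysPow A N) C)))
                           (t : seq (Tr O (tens O (sysPow A N) C) (unitS O))),
     [/\ test s, dilation (statePow rho N) (\sum_(P <- s) P), test t,
         (2 <= size s)%N && (2 <= size t)%N &
         x = (cerrorTerm E D s t)%:E]].

Definition EsetC (A : sys O) (rho : Tr O (unitS O) A) (N M : nat) (delta : R) : Prop :=
  exists (E : Tr O (sysPow A N) (sysPow Ob M)) (D : Tr O (sysPow Ob M) (sysPow A N)),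
    [/\ channel E, channel D & (cerror rho E D < delta%:E)%E].

Definition rateC (A : sys O) (rho : Tr O (unitS O) A) (delta : R) (N : nat) : \bar R :=
  (ereal_inf [set (M%:R)%:E | M in [set M | EsetC rho N M delta]] * (N%:R^-1)%:E)%E.

Definition infoC (A : sys O) (rho : Tr O (unitS O) A) : \bar R :=
  lim ((limn_esup (rateC rho delta)) @[delta --> 0^'+]).

End OPTnotions.

From HB Require Import structures.
From mathcomp Require Import all_boot all_order all_algebra.
From mathcomp Require Import all_classical all_reals all_analysis.
From mathcomp Require Import ring lra.

Set Implicit Arguments. Unset Strict Implicit. Unset Printing Implicit Defensive.
Import Order.TTheory GRing.Theory Num.Theory.
Local Open Scope ring_scope.

(* Every compression scheme that is good for the operational error is good for
   the classical one.  Indeed, for states [Psi] and [Psi'] of the same system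
   with the same normalization, the l1 distance between the outcome statistics
   of an observation test on [Psi] and on [Psi'] is the pairing of
   [2 a - e] with [Psi' - Psi], where [a] coarse-grains the outcomes on which
   [Psi'] is more likely, so it is at most [||Psi' - Psi||_op].  Hence the joint
   distributions of (preparation, observation) before and after the scheme are
   [eps]-close in l1, and by a Fannes-type bound on [x ln x] their mutual
   informations, divided by [log2 (m n - 1) >= log2 3], differ by at most
   [delta(eps)] uniformly in [m, n], with [delta(eps) -> 0].  So each classical
   rate at tolerance [delta] is at most a quantum rate at some tolerance, and
   the limits compare. *)

Section MutualInformationContinuity.
Variable R : realType.
Implicit Types (x y t u a : R) (n m : nat) (p q : nat -> nat -> R).

Definition xlnx x := x * ln x.

Lemma ln_le_subr1 x : 0 < x -> ln x <= x - 1.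
Proof. by move=> x0; have := @le_ln1Dx R (x - 1); rewrite addrCA subrr addr0; apply; lra. Qed.

(* Gibbs' inequality in one variable; at [t = 0] the junk value [ln 0] is killed
   by the factor [t]. *)
Lemma mul_lnB_le t u : 0 <= t -> 0 < u -> t * (ln u - ln t) <= u - t.
Proof.
move=> t0 u0; have [->|tn0] := eqVneq t 0; first by rewrite mul0r subr0 ltW.
have tp : 0 < t by rewrite lt_def tn0.
rewrite -ln_div ?posrE //; have := ln_le_subr1 (divr_gt0 u0 tp).
rewrite -(ler_pM2l tp) mulrBr mulr1 mulrCA divff ?gt_eqF // mulr1; exact.
Qed.

Lemma xlnx_diff_le x y : 0 <= x -> x <= y -> y <= 1 ->
  `|xlnx y - xlnx x| <= (y - x) - xlnx (y - x).
Proof.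
move=> x0 xy y1; have [/eqP|tn0] := eqVneq (y - x) 0.
  by rewrite subr_eq0 => /eqP ->; rewrite !subrr normr0 /xlnx mul0r subrr.
set t := y - x in tn0 *; have tp : 0 < t by rewrite lt_def tn0 subr_ge0.
have y0 : 0 < y by move: tp; rewrite /t; lra.
have lny : ln y <= 0 by exact: ln_le0.
have lnt : ln t <= ln y by rewrite ler_ln ?posrE // /t; lra.
have gibbs : x * (ln y - ln x) <= t := mul_lnB_le x0 y0.
have lnxy : 0 <= x * (ln y - ln x).
  have [->|xn0] := eqVneq x 0; first by rewrite mul0r.
  by rewrite mulr_ge0 // subr_ge0 ler_ln ?posrE // lt_def xn0.
have -> : xlnx y - xlnx x = t * ln y + x * (ln y - ln x) by rewrite /xlnx /t; ring.
have : t * ln t <= t * ln y by rewrite ler_pM2l.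
have : t * ln y <= 0 by rewrite mulr_ge0_le0 // ltW.
rewrite /xlnx ler_norml; move=> ? ?; apply/andP; split; lra.
Qed.

Lemma xlnx_dist_le x y : 0 <= x <= 1 -> 0 <= y <= 1 ->
  `|xlnx y - xlnx x| <= `|y - x| - xlnx `|y - x|.
Proof.
move=> /andP[x0 x1] /andP[y0 y1]; have [xy|/ltW yx] := leP x y.
  by rewrite [`|y - x|]ger0_norm ?subr_ge0 //; exact: xlnx_diff_le.
by rewrite distrC [`|y - x|]distrC [`|x - y|]ger0_norm ?subr_ge0 //; exact: xlnx_diff_le.
Qed.

(* The free parameter [a] trades [a^-1] against [tau * ln a]; this is what makes
   the bound vanish as [tau -> 0]. *)
Definition entropy_modulus a tau d := tau * ln d + a^-1 + tau * ln a.

Lemma le_entropy_modulus a t1 t2 d1 d2 : 1 <= a -> 0 <= t1 <= t2 -> 1 <= d1 <= d2 ->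
  entropy_modulus a t1 d1 <= entropy_modulus a t2 d2.
Proof.
move=> a1 /andP[t10 t12] /andP[d11 d12].
have : t1 * ln d1 <= t2 * ln d2.
  by rewrite ler_pM ?ln_ge0 // ler_ln ?posrE //; lra.
have : t1 * ln a <= t2 * ln a by rewrite ler_wpM2r ?ln_ge0.
rewrite /entropy_modulus; lra.
Qed.

Lemma sum_subr_xlnx_le (I : finType) (t : I -> R) a :
  (forall k, 0 <= t k) -> 1 <= a -> (0 < #|I|)%N ->
  \sum_k (t k - xlnx (t k)) <= entropy_modulus a (\sum_k t k) #|I|%:R.
Proof.
move=> t0 a1 I0; set tau := \sum_k t k; set d : R := #|I|%:R.
have d0 : 0 < d by rewrite ltr0n.
have ai0 : 0 <= a^-1 by rewrite invr_ge0; lra.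
have [tau0|taun0] := eqVneq tau 0.
  have tk0 k : t k = 0.
    move/eqP: tau0; rewrite /tau psumr_eq0 // => /allP/(_ k (mem_index_enum k)).
    by move=> /implyP/(_ isT)/eqP.
  by rewrite big1 => [|k _]; rewrite /entropy_modulus ?tau0 ?tk0 /xlnx; lra.
have taup : 0 < tau by rewrite lt_def taun0 sumr_ge0.
have sum_gibbs : \sum_k t k * (ln (tau / d) - ln (t k)) <= 0.
  apply: (@le_trans _ _ (\sum_k (tau / d - t k))).
    by apply: ler_sum => k _; apply: mul_lnB_le; rewrite ?divr_gt0.
  by rewrite sumrB sumr_const -mulr_natr divfK ?subrr // lt0r_neq0.
have tau_gibbs : tau * (ln a^-1 - ln tau) <= a^-1 - tau.
  by apply: mul_lnB_le; rewrite ?invr_gt0 //; lra.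
move: sum_gibbs tau_gibbs.
rewrite ln_div ?posrE // lnV ?posrE; last lra.
under eq_bigr do rewrite mulrBr.
rewrite sumrB -mulr_suml -/tau sumrB /entropy_modulus /xlnx -/tau; lra.
Qed.

Lemma entropy_dist_le (I : finType) (v w : I -> R) a :
  (forall k, 0 <= v k <= 1) -> (forall k, 0 <= w k <= 1) -> 1 <= a -> (0 < #|I|)%N ->
  `|\sum_k xlnx (v k) - \sum_k xlnx (w k)| <=
    entropy_modulus a (\sum_k `|v k - w k|) #|I|%:R.
Proof.
move=> v01 w01 a1 I0; rewrite -sumrB; apply: le_trans (ler_norm_sum _ _ _) _.
apply: le_trans (sum_subr_xlnx_le (fun k => normr_ge0 (v k - w k)) a1 I0).
by apply: ler_sum => k _; rewrite distrC [`|v k - w k|]distrC xlnx_dist_le.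
Qed.

Definition joint_distr n m p : Prop :=
  (forall i j, (i < n)%N -> (j < m)%N -> 0 <= p i j) /\
  \sum_(i < n) \sum_(j < m) p i j = 1.

Lemma ler_sum_term (I : finType) (F : I -> R) k :
  (forall i, 0 <= F i) -> F k <= \sum_i F i.
Proof. by move=> F0; rewrite (bigD1 k) //= lerDl sumr_ge0. Qed.

Lemma joint_distr_bounds n m p : joint_distr n m p ->
  [/\ forall (i : 'I_n) (j : 'I_m), 0 <= p i j <= 1,
      forall i : 'I_n, 0 <= \sum_(j < m) p i j <= 1 &
      forall j : 'I_m, 0 <= \sum_(i < n) p i j <= 1].
Proof.
move=> [p0 p1]; have p0' (i : 'I_n) (j : 'I_m) : 0 <= p i j by exact: p0.
have row1 (i : 'I_n) : \sum_(j < m) p i j <= 1.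
  rewrite -p1; apply: (@ler_sum_term _ (fun i : 'I_n => \sum_(j < m) p i j) i) => i0.
  by rewrite sumr_ge0.
split=> [i j|i|j]; rewrite ?sumr_ge0 //=.
- by rewrite p0' (le_trans _ (row1 i)) // (@ler_sum_term _ (fun j : 'I_m => p i j) j).
- rewrite -p1 exchange_big /=.
  by apply: (@ler_sum_term _ (fun j : 'I_m => \sum_(i < n) p i j) j) => j0; rewrite sumr_ge0.
Qed.

Lemma mutinf_lnE n m p : (forall i j, (i < n)%N -> (j < m)%N -> 0 <= p i j) ->
  mutinf n m p * ln 2 =
    \sum_(i < n) \sum_(j < m) xlnx (p i j)
    - \sum_(i < n) xlnx (\sum_(j < m) p i j)
    - \sum_(j < m) xlnx (\sum_(i < n) p i j).
Proof.
move=> p0; have ln2 : ln (2 : R) != 0 by rewrite gt_eqF // ln_gt0 // ltr1n.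
have termE (i : 'I_n) (j : 'I_m) :
    (if p i j == 0 then 0 else p i j * log2 (p i j /
      ((\sum_(j' < m) p i j') * (\sum_(i' < n) p i' j)))) * ln 2
    = xlnx (p i j) - p i j * ln (\sum_(j' < m) p i j')
      - p i j * ln (\sum_(i' < n) p i' j).
  have [->|pn0] := eqVneq (p i j) 0; first by rewrite /xlnx !mul0r !subrr.
  have pp : 0 < p i j by rewrite lt_def pn0 p0.
  have rowp : 0 < \sum_(j' < m) p i j'.
    by apply: lt_le_trans pp (@ler_sum_term _ (fun j' : 'I_m => p i j') j _) => j'; apply: p0.
  have colp : 0 < \sum_(i' < n) p i' j.
    by apply: lt_le_trans pp (@ler_sum_term _ (fun i' : 'I_n => p i' j) i _) => i'; apply: p0.
  by rewrite /log2 /xlnx ln_div ?posrE ?mulr_gt0 // lnM ?posrE //; field.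
rewrite /mutinf mulr_suml.
under eq_bigr do rewrite mulr_suml.
under eq_bigr do under eq_bigr do rewrite termE.
under eq_bigr do rewrite !sumrB.
rewrite !sumrB; congr (_ - _ - _); last rewrite exchange_big /=;
  by apply: eq_bigr => k _; rewrite /xlnx mulr_suml.
Qed.

Lemma mutinf_dist_le n m p q a : (0 < n)%N -> (0 < m)%N -> 1 <= a ->
  joint_distr n m p -> joint_distr n m q ->
  `|mutinf n m p - mutinf n m q| * ln 2 <=
    3 * entropy_modulus a (\sum_(i < n) \sum_(j < m) `|p i j - q i j|) (n * m)%:R.
Proof.
move=> n0 m0 a1 dp dq; set tau := \sum_(i < n) _.
have [pE pR pC] := joint_distr_bounds dp; have [qE qR qC] := joint_distr_bounds dq.
have row_tau : \sum_(i < n) `|\sum_(j < m) p i j - \sum_(j < m) q i j| <= tau.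
  by apply: ler_sum => i _; rewrite -sumrB ler_norm_sum.
have col_tau : \sum_(j < m) `|\sum_(i < n) p i j - \sum_(i < n) q i j| <= tau.
  by rewrite /tau exchange_big; apply: ler_sum => j _; rewrite -sumrB ler_norm_sum.
have entries : `|\sum_(i < n) \sum_(j < m) xlnx (p i j) - \sum_(i < n) \sum_(j < m) xlnx (q i j)|
    <= entropy_modulus a tau (n * m)%:R.
  have := entropy_dist_le (fun k : 'I_n * 'I_m => pE k.1 k.2) (fun k => qE k.1 k.2) a1.
  by rewrite card_prod !card_ord muln_gt0 n0 m0 /tau !pair_bigA; apply.
have rows := entropy_dist_le pR qR a1; rewrite card_ord in rows.
have cols := entropy_dist_le pC qC a1; rewrite card_ord in cols.
have rows_le : entropy_modulus a (\sum_(i < n) `|\sum_(j < m) p i j - \sum_(j < m) q i j|) n%:R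
    <= entropy_modulus a tau (n * m)%:R.
  apply: le_entropy_modulus; rewrite // ?row_tau ?andbT ?sumr_ge0 //.
  by rewrite ler1n n0 ler_nat leq_pmulr.
have cols_le : entropy_modulus a (\sum_(j < m) `|\sum_(i < n) p i j - \sum_(i < n) q i j|) m%:R
    <= entropy_modulus a tau (n * m)%:R.
  apply: le_entropy_modulus; rewrite // ?col_tau ?andbT ?sumr_ge0 //.
  by rewrite ler1n m0 ler_nat leq_pmull.
have ln2 : 0 < ln (2 : R) by rewrite ln_gt0 // ltr1n.
rewrite -(gtr0_norm ln2) -normrM mulrBl (mutinf_lnE dp.1) (mutinf_lnE dq.1).
move: entries (rows n0) (cols m0) rows_le cols_le.
set A1 := \sum_(i < n) _; set A2 := \sum_(i < n) _; set B1 := \sum_(i < n) _.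
set B2 := \sum_(i < n) _; set C1 := \sum_(j < m) _; set C2 := \sum_(j < m) _.
move=> eA eB eC eBle eCle.
have -> : A1 - B1 - C1 - (A2 - B2 - C2) = (A1 - A2) - (B1 - B2) - (C1 - C2) by ring.
apply: (le_trans (ler_normB _ _)); have := ler_normB (A1 - A2) (B1 - B2); lra.
Qed.

Lemma mutinf_dist_le_log n m p q a : (2 <= n)%N -> (2 <= m)%N -> 1 <= a ->
  joint_distr n m p -> joint_distr n m q ->
  `|mutinf n m p - mutinf n m q| / log2 ((m * n)%:R - 1) <=
    3 * ((\sum_(i < n) \sum_(j < m) `|p i j - q i j|) * (2 + ln a / ln 3)
         + (a * ln 3)^-1).
Proof.
move=> n2 m2 a1 dp dq; set tau := \sum_(i < n) _.
have tau0 : 0 <= tau by rewrite sumr_ge0 // => i _; rewrite sumr_ge0.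
have := mutinf_dist_le (ltnW n2) (ltnW m2) a1 dp dq.
rewrite -/tau /entropy_modulus; set X := `|_| * ln 2 => leX.
set x : R := (m * n)%:R - 1; set c := ln (3 : R); set L := ln x.
have x3 : 3 <= x.
  rewrite /x lerBrDr (_ : (3 : R) + 1 = 4%:R); last lra.
  by rewrite ler_nat (leq_mul m2 n2).
have c0 : 0 < c by rewrite ln_gt0 // ltr1n.
have cL : c <= L by rewrite ler_ln ?posrE //; lra.
have lnnm : ln (n * m)%:R <= 2 * L.
  have -> : (n * m)%:R = x + 1 :> R by rewrite /x subrK mulnC.
  have : ln (x + 1) <= ln (x ^+ 2) by rewrite ler_ln ?posrE ?exprn_gt0 // ?expr2; nra.
  by rewrite lnXn ?mulr2n -/L; lra.
have h1 : tau * ln (n * m)%:R <= tau * (2 * L) by rewrite ler_wpM2l.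
have h2 : a^-1 <= (a * c)^-1 * L.
  by rewrite invfM -mulrA ler_peMr ?invr_ge0 ?ler_pdivlMl ?mulr1 //; lra.
have h3 : tau * ln a <= tau * ln a / c * L.
  by rewrite -mulrA ler_peMr ?mulr_ge0 ?ln_ge0 ?ler_pdivlMl ?mulr1.
have L0 : 0 < L by lra.
have ln2 : ln (2 : R) != 0 by rewrite gt_eqF // ln_gt0 // ltr1n.
rewrite /log2 -/L (_ : _ / (L / ln 2) = X / L); last by rewrite /X; field; rewrite gt_eqF.
rewrite ler_pdivrMr //; lra.
Qed.

Lemma mutinf_uniform_continuity delta : 0 < delta -> exists2 eps, 0 < eps &
  forall n m p q, (2 <= n)%N -> (2 <= m)%N -> joint_distr n m p -> joint_distr n m q ->
  \sum_(i < n) \sum_(j < m) `|p i j - q i j| < eps ->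
  `|mutinf n m p - mutinf n m q| / log2 ((m * n)%:R - 1) <= delta.
Proof.
move=> d0; set c := ln (3 : R); have c0 : 0 < c by rewrite ln_gt0 // ltr1n.
set a := 6 / (c * delta) + 1; have a1 : 1 <= a by rewrite /a lerDr divr_ge0 // mulr_ge0 // ltW.
set K := 2 + ln a / c; have K0 : 0 < K.
  have : 0 <= ln a / c by apply: divr_ge0; [exact: ln_ge0 | exact: ltW].
  by rewrite /K; lra.
exists (delta / (6 * K)) => [|n m p q n2 m2 dp dq]; first by rewrite divr_gt0 ?mulr_gt0.
set tau := \sum_(i < n) _ => tau_lt; apply: le_trans (mutinf_dist_le_log n2 m2 a1 dp dq) _.
have : 3 * (tau * K) <= delta / 2.
  move: tau_lt; rewrite ltr_pdivlMr ?mulr_gt0 //; lra.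
have : 3 * (a * c)^-1 <= delta / 2.
  have ac : delta * (a * c) = 6 + delta * c.
    by rewrite /a; field; rewrite ?gt_eqF.
  rewrite ler_pdivrMr ?mulr_gt0 ?(lt_le_trans _ a1) //.
  have : 0 < delta * c by rewrite mulr_gt0.
  lra.
rewrite -/c -/K -/tau; lra.
Qed.

Lemma sumr_norm_zero_sum (I : finType) (F : I -> R) : \sum_i F i = 0 ->
  \sum_i `|F i| = 2 * \sum_(i | 0 <= F i) F i.
Proof.
have pos : \sum_(i | 0 <= F i) `|F i| = \sum_(i | 0 <= F i) F i.
  by apply: eq_bigr => i /ger0_norm.
have neg : \sum_(i | ~~ (0 <= F i)) `|F i| = - \sum_(i | ~~ (0 <= F i)) F i.
  by rewrite -sumrN; apply: eq_bigr => i; rewrite -ltNge => /ltr0_norm.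
move=> F0; rewrite (bigID (fun i => 0 <= F i)) /= in F0.
by rewrite (bigID (fun i => 0 <= F i)) /= pos neg; lra.
Qed.

End MutualInformationContinuity.

Section LinearForms.
Variables (R : realType) (U : lmodType R) (f : U -> R).
Hypothesis f_lin : forall k x y, f (k *: x + y) = k * f x + f y.

Lemma lform0 : f 0 = 0.
Proof.
have := f_lin 1 0 0; rewrite scale1r addr0 mul1r => f00.
by apply: (addIr (f 0)); rewrite add0r -f00.
Qed.

Lemma lformD x y : f (x + y) = f x + f y.
Proof. by rewrite -[x]scale1r f_lin mul1r scale1r. Qed.

Lemma lformZ k x : f (k *: x) = k * f x.
Proof. by rewrite -[k *: x]addr0 f_lin lform0 addr0. Qed.

Lemma lformB x y : f (x - y) = f x - f y.
Proof. by rewrite addrC -scaleN1r f_lin mulN1r addrC. Qed.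

Lemma lform_sum (I : Type) (r : seq I) (P : pred I) (F : I -> U) :
  f (\sum_(i <- r | P i) F i) = \sum_(i <- r | P i) f (F i).
Proof. exact: (big_morph f lformD lform0). Qed.

End LinearForms.

Section OPTCalculus.
Variables (R : realType) (O : OPTdata R).
Hypothesis HO : OPT_axioms O.

Lemma comp_assoc (A B C D : sys O) (f : Tr O C D) (g : Tr O B C) (h : Tr O A B) :
  comp f (comp g h) = comp (comp f g) h.
Proof. by case: HO => h0 _; apply: h0. Qed.

Lemma comp_linl (A B C : sys O) (a : R) (f f' : Tr O B C) (g : Tr O A B) :
  comp (a *: f + f') g = a *: comp f g + comp f' g.
Proof. by case: HO => _ [_ [h _]]; apply: h. Qed.

Lemma comp_linr (A B C : sys O) (a : R) (f : Tr O B C) (g g' : Tr O A B) :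
  comp f (a *: g + g') = a *: comp f g + comp f g'.
Proof. by case: HO => _ [_ [_ [h _]]]; apply: h. Qed.

Lemma scal_lin (a : R) (x y : Tr O (unitS O) (unitS O)) :
  scal (a *: x + y) = a * scal x + scal y.
Proof. by case: HO => _ [_ [_ [_ [_ [_ [_ [_ [h _]]]]]]]]; apply: h. Qed.

Lemma channel_idt (A : sys O) : channel (idt A).
Proof. by case: HO => _ [_ [_ [_ [_ [_ [_ [_ [_ [h _]]]]]]]]]; apply: h. Qed.

Lemma test_comp (A B C : sys O) (s : seq (Tr O A B)) (t : seq (Tr O B C)) :
  test s -> test t -> test [seq comp y x | x <- s, y <- t].
Proof. by case: HO => _ [_ [_ [_ [_ [_ [_ [_ [_ [_ [h _]]]]]]]]]]; apply: h. Qed.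

Lemma test_par (A B C D : sys O) (s : seq (Tr O A B)) (t : seq (Tr O C D)) :
  test s -> test t -> test [seq par x y | x <- s, y <- t].
Proof. by case: HO => _ [_ [_ [_ [_ [_ [_ [_ [_ [_ [_ [h _]]]]]]]]]]]; apply: h. Qed.

Lemma test_coarse (A B : sys O) (s : seq (Tr O A B)) (k : nat) (f : nat -> nat) :
  test s -> (forall i, i < size s -> f i < k)%N ->
  (forall j, j < k -> exists2 i, (i < size s)%N & f i = j)%N ->
  test (coarse s k f).
Proof. by case: HO => _ [_ [_ [_ [_ [_ [_ [_ [_ [_ [_ [_ [h _]]]]]]]]]]]]; apply: h. Qed.

Lemma test_scal (s : seq (Tr O (unitS O) (unitS O))) : test s ->
  (forall x, x \in s -> 0 <= scal x) /\ \sum_(x <- s) scal x = 1.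
Proof. by case: HO => _ [_ [_ [_ [_ [_ [_ [_ [_ [_ [_ [_ [_ h]]]]]]]]]]]]; apply: h. Qed.

Lemma test_comp1 (A B : sys O) (s : seq (Tr O A B)) (k : Tr O B B) :
  test s -> channel k -> test [seq comp k x | x <- s].
Proof. by move=> ts /(test_comp ts); congr test; elim: s {ts} => //= x s ->. Qed.

Lemma channel_comp (A B C : sys O) (f : Tr O A B) (g : Tr O B C) :
  channel f -> channel g -> channel (comp g f).
Proof. exact: test_comp. Qed.

Lemma channel_par (A B C D : sys O) (f : Tr O A B) (g : Tr O C D) :
  channel f -> channel g -> channel (par f g).
Proof. exact: test_par. Qed.

Lemma pairing_linl (A : sys O) (d : Tr O (unitS O) A) k (a b : Tr O A (unitS O)) :
  pairing (k *: a + b) d = k * pairing a d + pairing b d.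
Proof. by rewrite /pairing comp_linl scal_lin. Qed.

Lemma pairing_linr (A : sys O) (a : Tr O A (unitS O)) k (x y : Tr O (unitS O) A) :
  pairing a (k *: x + y) = k * pairing a x + pairing a y.
Proof. by rewrite /pairing comp_linr scal_lin. Qed.

Lemma pairingBl (A : sys O) (d : Tr O (unitS O) A) (a b : Tr O A (unitS O)) :
  pairing (a - b) d = pairing a d - pairing b d.
Proof. exact: (@lformB _ _ (fun a => pairing a d) (pairing_linl d)). Qed.

Lemma pairingZl (A : sys O) (d : Tr O (unitS O) A) k (a : Tr O A (unitS O)) :
  pairing (k *: a) d = k * pairing a d.
Proof. exact: (@lformZ _ _ (fun a => pairing a d) (pairing_linl d)). Qed.

Lemma pairing_suml (A : sys O) (d : Tr O (unitS O) A) (I : Type) (r : seq I) (P : pred I)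
    (F : I -> Tr O A (unitS O)) :
  pairing (\sum_(i <- r | P i) F i) d = \sum_(i <- r | P i) pairing (F i) d.
Proof. exact: (@lform_sum _ _ (fun a => pairing a d) (pairing_linl d)). Qed.

Lemma pairingBr (A : sys O) (a : Tr O A (unitS O)) (x y : Tr O (unitS O) A) :
  pairing a (x - y) = pairing a x - pairing a y.
Proof. exact: (@lformB _ _ (pairing a) (pairing_linr a)). Qed.

End OPTCalculus.

Section StronglyCausalOPT.
Variables (R : realType) (O : OPTdata R) (e : forall A : sys O, Tr O A (unitS O)).
Hypotheses (HO : OPT_axioms O) (Hsc : StronglyCausal e).

Lemma det_effectE (A : sys O) (a : Tr O A (unitS O)) : channel a -> a = e A.
Proof. by case: Hsc => _ /(_ A) [_]; apply. Qed.

Lemma channel_e (A : sys O) : channel (e A).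
Proof. by case: Hsc => _ /(_ A) []. Qed.

Lemma e_comp_channel (A B : sys O) (k : Tr O A B) : channel k -> comp (e B) k = e A.
Proof. by move=> ck; apply/det_effectE/(channel_comp HO ck)/channel_e. Qed.

Lemma sum_obs_test (A : sys O) (t : seq (Tr O A (unitS O))) :
  test t -> (0 < size t)%N -> \sum_(j < size t) t`_j = e A.
Proof.
move=> tt t0; apply: det_effectE.
have := test_coarse HO (k := 1) (f := fun=> 0%N) tt (fun _ _ => isT).
by apply=> j; rewrite ltnS leqn0 => /eqP ->; exists 0%N.
Qed.

Lemma test_joint_distr (X : sys O) (u : seq (Tr O (unitS O) X))
    (t : seq (Tr O X (unitS O))) : test u -> test t ->
  joint_distr (size u) (size t) (fun i j => pairing t`_j u`_i).
Proof.
move=> tu tt; have [ge0 sum1] := test_scal HO (test_comp HO tu tt); split.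
  by move=> i j iu jt; apply/ge0/allpairs_f; exact: mem_nth.
rewrite -sum1 big_allpairs_dep /= (big_nth 0) big_mkord.
by apply: eq_bigr => i _; rewrite (big_nth 0) big_mkord.
Qed.

(* Coarse-grain [t] into the events on which [d] is nonnegative and the rest;
   if one of the two classes is empty, the deterministic effect does the job. *)
Lemma effect_pos_part (X : sys O) (t : seq (Tr O X (unitS O))) (d : Tr O (unitS O) X) :
  test t -> (0 < size t)%N -> pairing (e X) d = 0 ->
  exists2 a, Eff a & pairing a d = \sum_(j < size t | 0 <= pairing t`_j d) pairing t`_j d.
Proof.
move=> tt t0 ed; pose D j := pairing t`_j d.
have Ee : Eff (e X) by exists [:: e X]; rewrite mem_head; split=> //; exact: channel_e.
case: (pselect ((exists2 j, (j < size t)%N & D j < 0) /\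
                (exists2 j, (j < size t)%N & 0 <= D j))) =>
  [[[j0 j0t j0n] [j1 j1t j1p]]|unmixed].
  pose f j := if 0 <= D j then 0%N else 1%N.
  have tc : test (coarse t 2 f).
    apply: test_coarse => // [i _|j]; first by rewrite /f; case: ifP.
    rewrite ltnS leq_eqVlt ltnS leqn0 => /orP[] /eqP ->.
      by exists j0 => //; rewrite /f leNgt j0n.
    by exists j1 => //; rewrite /f j1p.
  exists (\sum_(j < size t | f j == 0%N) t`_j); first by exists (coarse t 2 f); rewrite mem_head.
  rewrite (pairing_suml HO).
  by apply: eq_bigl => j; rewrite /f; case: ifP.
exists (e X) => //; have [[j jt Dj]|allpos] := pselect (exists2 j, (j < size t)%N & D j < 0).
  by rewrite big1 // => i Di; case: unmixed; split; [exists j | exists i].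
rewrite -(sum_obs_test tt t0) (pairing_suml HO).
apply: eq_bigl => j; rewrite leNgt; apply/esym/negP => Dj.
by apply: allpos; exists j.
Qed.

Lemma opnorm_ge_sum_norm (X : sys O) (t : seq (Tr O X (unitS O))) (d : Tr O (unitS O) X) :
  test t -> (0 < size t)%N -> pairing (e X) d = 0 ->
  ((\sum_(j < size t) `|pairing t`_j d|)%:E <= opnorm e d)%E.
Proof.
move=> tt t0 ed; have [a Ea aE] := effect_pos_part tt t0 ed.
apply: le_trans (ereal_sup_ubound _); last by exists a.
rewrite lee_fin (pairingBl HO) (pairingZl HO) ed subr0 aE.
rewrite sumr_norm_zero_sum // -(pairing_suml HO).
by rewrite sum_obs_test.
Qed.

End StronglyCausalOPT.

Section ClassicalVersusQuantumError.
Variables (R : realType) (O : OPTdata R) (e : forall A : sys O, Tr O A (unitS O)).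
Hypotheses (HO : OPT_axioms O) (Hsc : StronglyCausal e).
Variables (Ob A : sys O) (rho : Tr O (unitS O) A).

Lemma Eset_mono N M eps eps' : eps <= eps' ->
  Eset e Ob rho N M eps -> Eset e Ob rho N M eps'.
Proof.
move=> le_eps [E [D [cE cD small]]]; exists E, D; split=> //.
by apply: lt_le_trans small _; rewrite lee_fin.
Qed.

Lemma EsetC_mono N M delta delta' : delta <= delta' ->
  EsetC e Ob rho N M delta -> EsetC e Ob rho N M delta'.
Proof.
move=> le_delta [E [D [cE cD small]]]; exists E, D; split=> //.
by apply: lt_le_trans small _; rewrite lee_fin.
Qed.

Lemma qerror_ge_l1 N M (E : Tr O (sysPow A N) (sysPow Ob M))
    (D : Tr O (sysPow Ob M) (sysPow A N)) (C : sys O)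
    (s : seq (Tr O (unitS O) (tens O (sysPow A N) C)))
    (t : seq (Tr O (tens O (sysPow A N) C) (unitS O))) :
  channel E -> channel D -> test s -> dilation e (statePow rho N) (\sum_(P <- s) P) ->
  test t -> (0 < size t)%N ->
  ((\sum_(i < size s) \sum_(j < size t)
      `|pairing t`_j s`_i - pairing t`_j (comp (par (comp D E) (idt C)) s`_i)|)%:E
   <= qerror e rho E D)%E.
Proof.
move=> cE cD ts dil tt t0; set k := par (comp D E) (idt C).
have ck : channel k := channel_par HO (channel_comp HO cE cD) (channel_idt HO _).
apply: (@le_trans _ _ (\sum_(i < size s) opnorm e (comp k s`_i - s`_i))%E).
  rewrite -sumEFin; apply: lee_sum => i _.
  under eq_bigr do rewrite distrC -(pairingBr HO).
  apply: opnorm_ge_sum_norm => //.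
  by rewrite (pairingBr HO) /pairing comp_assoc // (e_comp_channel HO) // subrr.
apply: ereal_sup_ubound; exists C, (\sum_(P <- s) P), s; split => //.
  by split => //; exists s, (nseq (size s) true); rewrite mask_true.
by rewrite (big_nth 0) big_mkord.
Qed.

Lemma cerror_le_of_qerror delta : 0 < delta -> exists2 eps, 0 < eps &
  forall N M (E : Tr O (sysPow A N) (sysPow Ob M)) (D : Tr O (sysPow Ob M) (sysPow A N)),
  channel E -> channel D -> (qerror e rho E D < eps%:E)%E ->
  (cerror e rho E D <= delta%:E)%E.
Proof.
move=> d0; have [eps eps0 cont] := mutinf_uniform_continuity d0.
exists eps => // N M E D cE cD small.
apply: ge_ereal_sup => _ [C [s [t [ts dil tt /andP[s2 t2] ->]]]].
rewrite lee_fin; set k := par (comp D E) (idt C).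
have ck : channel k := channel_par HO (channel_comp HO cE cD) (channel_idt HO _).
have qs : joint_distr (size s) (size t) (fun i j => pairing t`_j (comp k s`_i)).
  have [q0 q1] := test_joint_distr HO (test_comp1 HO ts ck) tt.
  rewrite size_map in q0 q1; split=> [i j iu jt|].
    by have := q0 i j iu jt; rewrite (nth_map 0).
  by rewrite -q1; apply: eq_bigr => i _; apply: eq_bigr => j _; rewrite (nth_map 0).
apply: (cont _ _ _ _ s2 t2 (test_joint_distr HO ts tt) qs).
by rewrite -lte_fin (le_lt_trans _ small) // (qerror_ge_l1 cE cD ts dil tt (ltnW t2)).
Qed.

Lemma EsetC_of_Eset delta : 0 < delta -> exists2 eps, 0 < eps < 1 &
  forall N M, Eset e Ob rho N M eps -> EsetC e Ob rho N M delta.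
Proof.
move=> d0; have [eps eps0 bound] := cerror_le_of_qerror (divr_gt0 d0 (ltr0n R 2)).
exists (Num.min eps 2^-1).
  by rewrite lt_min eps0 invr_gt0 ltr0n /= gt_min invf_lt1 ?ltr1n ?orbT.
move=> N M [E [D [cE cD small]]]; exists E, D; split => //.
apply: le_lt_trans (bound _ _ E D cE cD (lt_le_trans small _)) _.
  by rewrite lee_fin ge_min lexx.
by rewrite lte_fin; lra.
Qed.

End ClassicalVersusQuantumError.

Section Rates.
Local Open Scope classical_set_scope.
Local Open Scope ereal_scope.
Variable R : realType.

Lemma le_limn_esup (u v : (\bar R)^nat) : (forall n, u n <= v n) ->
  limn_esup u <= limn_esup v.
Proof.
move=> uv; apply: le_ereal_inf_tmp => _ [V FV <-].
apply: ge_ereal_inf; exists (ereal_sup (u @` V)); first by exists V.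
by apply: ge_ereal_sup => _ [n Vn <-]; apply: le_trans (uv n) _; apply: ereal_sup_ubound; exists n.
Qed.

(* [rateQ rho eps] and [rateC rho delta] are [rate] of the sets of achievable [M]. *)
Definition rate (S : nat -> set nat) (N : nat) : \bar R :=
  ereal_inf [set (M%:R)%:E | M in S N] * (N%:R^-1)%:E.

Lemma le_rate (S T : nat -> set nat) : (forall N, S N `<=` T N) ->
  forall N, rate T N <= rate S N.
Proof.
move=> ST N; apply: lee_wpmul2r; first by rewrite lee_fin invr_ge0.
by apply: ereal_inf_le_tmp => _ [M SM <-]; exists M => //; exact: ST.
Qed.

Lemma lim_antitone_at_right0 (F : R -> \bar R) :
  (forall x y, (x <= y)%R -> F y <= F x) ->
  lim (F x @[x --> 0^'+]) = ereal_sup (F @` [set` `]0, 1[%R]).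
Proof.
move=> Fanti; apply/cvg_lim => //; apply: nonincreasing_at_right_cvge.
  by rewrite bnd_simp.
by move=> x y _ _; exact: Fanti.
Qed.

End Rates.

Theorem mainTheorem7 (R : realType) (O : OPTdata R)
  (e : forall A : sys O, Tr O A (unitS O)) (Ob : sys O)
  (HO : OPT_axioms O) (Hsc : StronglyCausal e) (Hdig : digitalizable Ob)
  (A : sys O) (rho : Tr O (unitS O) A) (Hrho : St1 rho) :
  (infoC e Ob rho <= infoQ e Ob rho)%E.
Proof.
have antiQ (x y : R) : (x <= y)%R ->
    (limn_esup (rateQ e Ob rho y) <= limn_esup (rateQ e Ob rho x))%E.
  by move=> xy; apply: le_limn_esup; apply: le_rate => N M; exact: Eset_mono.
have antiC (x y : R) : (x <= y)%R ->
    (limn_esup (rateC e Ob rho y) <= limn_esup (rateC e Ob rho x))%E.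
  by move=> xy; apply: le_limn_esup; apply: le_rate => N M; exact: EsetC_mono.
rewrite /infoC /infoQ (lim_antitone_at_right0 antiC) (lim_antitone_at_right0 antiQ).
apply: ge_ereal_sup => x [delta]; rewrite /= in_itv /= => /andP[d0 _] <-.
have [eps eps01 EsetC_of_eps] := EsetC_of_Eset HO Hsc Ob rho d0.
apply: le_trans (ereal_sup_ubound _); last by exists eps => //=; rewrite in_itv.
by apply: le_limn_esup; apply: le_rate => N M; exact: EsetC_of_eps.
Qed.
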